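(* Let $(X,\mathcal{F})$ be the game hypergraph constructed from a 3SAT formula $\varphi$ as described in the context, and consider the strict Avoider-Enforcer game on it in which Enforcer moves first. Whenever Enforcer claims a vertex in some box, Avoider has to claim a vertex in the same box in her reply: precisely, if in some round Enforcer claims a vertex of box $B_i$ and Avoider's immediate reply is a vertex outside $B_i$, then from that position Enforcer has a strategy that wins the game.
   Context: A (strict) Avoider-Enforcer game is given by a finite board $X$ and a family $\mathcal{F}$ of losing sets; Avoider and Enforcer alternately claim one unclaimed element of $X$ per move until all of $X$ is claimed; Enforcer wins iff Avoider has claimed all elements of some $f\in\mathcal{F}$. Construction from a 3SAT formula $\varphi$ on variables $x_1,\dots,x_n$ (each clause having exactly three literals on three distinct variables): the board is $X=\bigcup_{i=1}^n\{a_i,s_i,x_i,\overline{x_i}\}$, consisting of $4n$ distinct vertices; the set $B_i=\{a_i,s_i,x_i,\overline{x_i}\}$ is called box $i$. The vertices $x_i,\overline{x_i}$ are identified with the literals $x_i,\overline{x_i}$ of $\varphi$. The family $\mathcal{F}$ consists of (1) for each $i$, all four 3-element subsets of $B_i$; and (2) for each clause $C=\ell_i\lor\ell_j\lor\ell_k$ of $\varphi$, where $\ell_h\in\{x_h,\overline{x_h}\}$ for $h=i,j,k$, the set $L_C=\{s_i,s_j,s_k,\overline{\ell_i},\overline{\ell_j},\overline{\ell_k}\}$, where $\overline{\ell}$ denotes the negation of literal $\ell$ (with $\overline{\overline{x_h}}=x_h$). *)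

From mathcomp Require Import all_boot.
Set Implicit Arguments. Unset Strict Implicit. Unset Printing Implicit Defensive.

(* Vertices of the board: box index i : 'I_n and a kind in 'I_4:
   kind 0 = a_i, kind 1 = s_i, kind 2 = x_i, kind 3 = \overline{x_i}. *)
Definition vertex (n : nat) := ('I_n * 'I_4)%type.

Definition kA : 'I_4 := @Ordinal 4 0 isT.
Definition kS : 'I_4 := @Ordinal 4 1 isT.
Definition kX : 'I_4 := @Ordinal 4 2 isT.
Definition kXbar : 'I_4 := @Ordinal 4 3 isT.

Definition box_of {n} (v : vertex n) : 'I_n := v.1.

Definition box {n} (i : 'I_n) : {set vertex n} := [set v | v.1 == i].

Definition s_vert {n} (i : 'I_n) : vertex n := (i, kS).

(* A literal is a variable together with a polarity:
   (h, true) is x_h, (h, false) is \overline{x_h}. *)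
Definition literal (n : nat) := ('I_n * bool)%type.
Definition lit_var {n} (l : literal n) : 'I_n := l.1.
Definition lit_neg {n} (l : literal n) : literal n := (l.1, ~~ l.2).
Definition lit_vert {n} (l : literal n) : vertex n :=
  (l.1, if l.2 then kX else kXbar).

Definition clause (n : nat) := (literal n * literal n * literal n)%type.
Definition cl1 {n} (C : clause n) := C.1.1.
Definition cl2 {n} (C : clause n) := C.1.2.
Definition cl3 {n} (C : clause n) := C.2.

Definition wf_clause {n} (C : clause n) : bool :=
  [&& lit_var (cl1 C) != lit_var (cl2 C),
      lit_var (cl1 C) != lit_var (cl3 C) &
      lit_var (cl2 C) != lit_var (cl3 C)].

Definition wf_formula {n} (phi : seq (clause n)) : bool := all wf_clause phi.

Definition clause_set {n} (C : clause n) : {set vertex n} :=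
  [set s_vert (lit_var (cl1 C)); s_vert (lit_var (cl2 C)); s_vert (lit_var (cl3 C));
       lit_vert (lit_neg (cl1 C)); lit_vert (lit_neg (cl2 C));
       lit_vert (lit_neg (cl3 C))].

Definition game_family {n} (phi : seq (clause n)) : {set {set vertex n}} :=
  [set f : {set vertex n} |
     [exists i : 'I_n, (f \subset box i) && (#|f| == 3)]
     || (f \in [seq clause_set C | C <- phi])].

(* Strict Avoider-Enforcer game, Enforcer moving first.  A position is the
   pair (A, E) of sets claimed by Avoider and Enforcer.  Since Enforcer moves
   first, it is Enforcer's turn iff #|E| = #|A|.
   [ewins F A E] : Enforcer has a strategy winning the game from (A, E)
   (inductively: the finite game tree admits a winning strategy). *)
Inductive ewins {T : finType} (F : {set {set T}}) : {set T} -> {set T} -> Prop :=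
| ewins_end (A E : {set T}) :
    (forall v, v \in A :|: E) ->
    (exists2 f, f \in F & f \subset A) ->
    ewins F A E
| ewins_enforcer (A E : {set T}) (v : T) :
    #|E| = #|A| ->
    v \notin A :|: E ->
    ewins F A (v |: E) ->
    ewins F A E
| ewins_avoider (A E : {set T}) :
    #|A| < #|E| ->
    (exists v, v \notin A :|: E) ->
    (forall v, v \notin A :|: E -> ewins F (v |: A) E) ->
    ewins F A E.

From mathcomp Require Import all_boot zify.

Set Implicit Arguments.
Unset Strict Implicit.

(* Let j be the box of Avoider's reply.  Right after that reply Avoider owns one
   more vertex of B_j than Enforcer does.  Enforcer keeps it that way by never
   entering B_j while some free vertex lies outside it; once only vertices of
   B_j are free, everything outside B_j is claimed and the two players hold
   equally many vertices, so the lead of Avoider inside B_j has the parity of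
   |X| - |B_j|, which is even; a lead of at least 2 survives Enforcer's move.
   At the end Avoider owns at least 3 vertices of B_j, hence a losing triple. *)

Lemma exists_subset_card (T : finType) (S : {set T}) c :
  c <= #|S| -> exists2 S' : {set T}, S' \subset S & #|S'| = c.
Proof.
move=> le_cS; exists [set x in take c (enum S)].
  by apply/subsetP => x; rewrite inE => /mem_take; rewrite mem_enum.
rewrite cardsE (card_uniqP _) ?take_uniq ?enum_uniq // size_take -cardE.
by case: ltngtP le_cS.
Qed.

Lemma cardsC_setU1 (T : finType) (X : {set T}) v :
  v \notin X -> #|~: (v |: X)| = #|~: X|.-1.
Proof.
move=> vNX; have -> : ~: (v |: X) = ~: X :\ v by rewrite setDE setCU setIC.
by rewrite (cardsD1 v (~: X)) inE vNX.
Qed.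

Lemma cardsU1I (T : finType) (E J : {set T}) v :
  v \notin E -> #|(v |: E) :&: J| = (v \in J) + #|E :&: J|.
Proof.
move=> vNE; rewrite setIUl; case: (boolP (v \in J)) => vJ.
  have -> : [set v] :&: J = [set v] by apply/setIidPl; rewrite sub1set.
  by rewrite cardsU1 inE (negbTE vNE).
have -> : [set v] :&: J = set0.
  by apply/setP => u; rewrite !inE; case: eqP => // ->; rewrite (negbTE vJ).
by rewrite set0U.
Qed.

Lemma disjoint_setU1 (T : finType) (A E : {set T}) v :
  v \notin E -> [disjoint A & E] -> [disjoint v |: A & E].
Proof. by move=> vNE dis_AE; rewrite disjoints_subset subUset sub1set inE vNE -disjoints_subset. Qed.

Section BlockMajority.

Variables (T : finType) (F : {set {set T}}) (J : {set T}) (m k : nat).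
Hypothesis card_T : #|T| = m.*2.
Hypothesis card_J : #|J| = k.*2.
Hypothesis majority_losing :
  forall S : {set T}, S \subset J -> k < #|S| -> exists2 f, f \in F & f \subset S.

Lemma ewins_full_board (A E : {set T}) :
  [disjoint A & E] -> (forall v, v \in A :|: E) ->
  #|E :&: J| < #|A :&: J| -> ewins F A E.
Proof.
move=> dis_AE full lt_EA; apply: ewins_end => //.
have cover_J : (A :&: J) :|: (E :&: J) = J.
  by apply/setP => v; have := full v; rewrite !inE; case: (v \in J); rewrite ?andbT ?andbF.
have dis_J : (A :&: J) :&: (E :&: J) = set0.
  by rewrite setIACA (disjoint_setI0 dis_AE) set0I.
have lt_kA : k < #|A :&: J|.
  by have := cardsUI (A :&: J) (E :&: J); rewrite cover_J dis_J cards0 card_J; lia.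
have [f Ff sub_f] := majority_losing (subsetIr A J) lt_kA.
by exists f => //; apply: subset_trans sub_f (subsetIl A J).
Qed.

(* Here Avoider's lead inside J has the parity of #|T| - #|J|, so it is even. *)
Lemma forced_entry_lead (A E : {set T}) :
  [disjoint A & E] -> #|E| = #|A| -> ~: (A :|: E) \subset J ->
  #|E :&: J| < #|A :&: J| -> #|E :&: J|.+1 < #|A :&: J|.
Proof.
move=> dis_AE eq_AE free_J lt_EA.
have outside_J : (A :\: J) :|: (E :\: J) = ~: J.
  apply/setP => v; rewrite !inE; case: (boolP (v \in J)) => //= vNJ.
  by apply/negPn; apply: contra vNJ => vF; apply: (subsetP free_J); rewrite !inE.
have dis_out : (A :\: J) :&: (E :\: J) = set0.
  by rewrite !setDE setIACA (disjoint_setI0 dis_AE) set0I.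
have := cardsUI (A :\: J) (E :\: J); rewrite outside_J dis_out cards0.
have := cardsC J; have := cardsID J A; have := cardsID J E; lia.
Qed.

Lemma ewins_block_majority (A E : {set T}) :
  [disjoint A & E] -> #|A| <= #|E| <= #|A|.+1 ->
  #|E :&: J| < #|A :&: J| -> ewins F A E.
Proof.
move free_r : #|~: (A :|: E)| => r.
elim: r A E free_r => [|r IH] A E free_r dis_AE turn lt_EA.
  apply: ewins_full_board => // v; apply/negPn; rewrite -in_setC.
  by move/cards0_eq: free_r => ->; rewrite inE.
have has_free : exists v, v \notin A :|: E.
  have /set0Pn[v vF] : ~: (A :|: E) != set0 by rewrite -card_gt0 free_r.
  by exists v; rewrite -in_setC.
have [eq_AE | lt_AE] : #|E| = #|A| \/ #|E| = #|A|.+1 by lia.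
- have [v vF v_ok] : exists2 v, v \notin A :|: E & (v \notin J) || (~: (A :|: E) \subset J).
    have [free_J | /subsetPn[v vF vNJ]] := boolP (~: (A :|: E) \subset J).
      by have [v vF] := has_free; exists v; rewrite ?free_J ?orbT.
    by exists v; [rewrite -in_setC | rewrite vNJ].
  have [vNA vNE] : v \notin A /\ v \notin E by move: vF; rewrite inE negb_or => /andP.
  apply: (ewins_enforcer (v := v)) => //; apply: IH.
  + by rewrite setUCA cardsC_setU1 // free_r.
  + by rewrite disjoint_sym disjoint_setU1 // disjoint_sym.
  + by rewrite cardsU1 vNE; lia.
  + rewrite cardsU1I //; case: (boolP (v \in J)) v_ok => //= vJ free_J.
    by have := forced_entry_lead dis_AE eq_AE free_J lt_EA; lia.
- apply: ewins_avoider => [|//|v vF]; first by lia.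
  have [vNA vNE] : v \notin A /\ v \notin E by move: vF; rewrite inE negb_or => /andP.
  apply: IH.
  + by rewrite -setUA cardsC_setU1 // free_r.
  + exact: disjoint_setU1.
  + by rewrite cardsU1 vNA; lia.
  + by apply: (leq_trans lt_EA); apply/subset_leq_card/setSI/subsetUr.
Qed.

End BlockMajority.

Lemma perm_flatten_pairs (T : eqType) (s : seq (T * T)) :
  perm_eq (flatten [seq [:: r.1; r.2] | r <- s])
          ([seq r.1 | r <- s] ++ [seq r.2 | r <- s]).
Proof.
elim: s => [|r s IH] //=; rewrite perm_cons.
by rewrite perm_sym -(cat1s r.2) perm_catCA /= perm_cons perm_sym.
Qed.

Lemma card_seq_set (T : finType) (s : seq T) : uniq s -> #|[set x in s]| = size s.
Proof. by move=> s_uniq; rewrite cardsE (card_uniqP s_uniq). Qed.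

Lemma card_seq_setI (T : finType) (s : seq T) (J : {set T}) :
  uniq s -> #|[set x in s] :&: J| = count [in J] s.
Proof.
move=> s_uniq; have -> : [set x in s] :&: J = [set x in filter [in J] s].
  by apply/setP => v; rewrite !inE mem_filter andbC.
by rewrite card_seq_set ?filter_uniq // size_filter.
Qed.

Lemma disjoint_seq_set (T : finType) (s1 s2 : seq T) :
  ~~ has [in s1] s2 -> [disjoint [set x in s1] & [set x in s2]].
Proof.
move=> s12; apply/pred0P => x /=; rewrite !inE; apply/negP => /andP[x1 x2].
by case/hasP: s12; exists x.
Qed.

Lemma card_box n (i : 'I_n) : #|box i| = 4.
Proof.
have -> : box i = setX [set i] [set: 'I_4] by apply/setP => v; rewrite !inE andbT.
by rewrite cardsX cards1 cardsT card_ord.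
Qed.

Lemma box_triple_losing n (phi : seq (clause n)) (i : 'I_n) (S : {set vertex n}) :
  S \subset box i -> #|S| = 3 -> S \in game_family phi.
Proof.
move=> sub_S card_S; rewrite inE; apply/orP; left.
by apply/existsP; exists i; rewrite sub_S card_S.
Qed.

Theorem lemma3 (n : nat) (phi : seq (clause n)) (Hphi : wf_formula phi)
  (p : seq (vertex n * vertex n)) (e a : vertex n) (i : 'I_n) :
  uniq (flatten [seq [:: r.1; r.2] | r <- p] ++ [:: e; a]) ->
  (forall r, r \in p -> box_of r.1 = box_of r.2) ->
  e \in box i ->
  a \notin box i ->
  ewins (game_family phi)
    [set v | v \in [seq r.2 | r <- p] ++ [:: a]]
    [set v | v \in [seq r.1 | r <- p] ++ [:: e]].
Proof.
move=> p_uniq same_box e_i a_Ni; set q := p ++ [:: (e, a)].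
have -> : [seq r.2 | r <- p] ++ [:: a] = [seq r.2 | r <- q] by rewrite map_cat.
have -> : [seq r.1 | r <- p] ++ [:: e] = [seq r.1 | r <- q] by rewrite map_cat.
have : uniq (flatten [seq [:: r.1; r.2] | r <- q]) by rewrite map_cat flatten_cat.
rewrite (perm_uniq (perm_flatten_pairs q)) cat_uniq => /and3P[uE disEA uA].
have card_T : #|{: vertex n}| = (n.*2).*2 by rewrite card_prod !card_ord; lia.
have card_J : #|box (box_of a)| = 2.*2 by rewrite card_box.
apply: (ewins_block_majority (F := game_family phi) card_T card_J).
- move=> S sub_S lt_2S; have [S' sub_S' card_S'] := exists_subset_card lt_2S.
  by exists S' => //; apply: box_triple_losing (subset_trans sub_S' sub_S) card_S'.
- by rewrite disjoint_sym disjoint_seq_set.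
- by rewrite !card_seq_set // !size_map leqnn leqnSn.
- rewrite !card_seq_setI // !count_map !count_cat /=.
  have -> : count (preim (fun r => r.1) [in box (box_of a)]) p =
            count (preim (fun r => r.2) [in box (box_of a)]) p.
    by apply: eq_in_count => r /same_box; rewrite /= !inE /box_of => ->.
  have e_Nj : e \notin box (box_of a).
    by move: e_i a_Ni; rewrite !inE => /eqP ->; rewrite eq_sym.
  by rewrite (negbTE e_Nj) inE eqxx /= ltn_add2l.
Qed.
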